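(* Let $\sigma>0$, $t>0$, and $a\sim N(0,\sigma^2)$. Then \[ \mathbb{E}\,S_t^2(a)\ \le\ \sigma^4\sqrt{\frac{2}{\pi e}}\;t^{-2}\,e^{-t^2/(2\sigma^2)}, \] where $S_t$ is the soft thresholding operator.
   Context: The soft thresholding operator is $S_t(u)=u-t$ if $u>t$, $S_t(u)=0$ if $|u|\le t$, and $S_t(u)=u+t$ if $u<-t$. *)

From HB Require Import structures.
From mathcomp Require Import all_boot all_order all_algebra.
From mathcomp Require Import all_classical all_reals all_analysis.
Set Implicit Arguments. Unset Strict Implicit. Unset Printing Implicit Defensive.
Import Order.TTheory GRing.Theory Num.Theory.
Local Open Scope ring_scope.

Definition soft_thresh {R : realType} (t u : R) : R :=
  if t < u then u - t else if u < - t then u + t else 0.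

(* Write S_t(a)^2 = (|a| - t)_+^2, s = sigma, and |a| = t + u with u >= 0.  The
   Gaussian density factors as phi(t + u) = phi(t) e^(-u t/s^2) e^(-u^2/(2 s^2)),
   and u e^(-u^2/(2 s^2)) <= s e^(-1/2), so the integrand is dominated by
   phi(t) s e^(-1/2) u e^(-u t/s^2).  Each of the two tails |a| >= t of this
   bound integrates to phi(t) s e^(-1/2) s^4/t^2, and
   2 phi(t) s e^(-1/2) = sqrt(2/(pi e)) e^(-t^2/(2 s^2)). *)

From mathcomp Require Import all_boot all_order all_algebra.
From mathcomp Require Import all_classical all_reals all_analysis.
From mathcomp Require Import measurable_realfun.
From mathcomp Require Import ring lra.
Import Order.TTheory GRing.Theory Num.Theory.
Import numFieldNormedType.Exports.
Local Open Scope ring_scope.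
Local Open Scope classical_set_scope.

Local Notation excess t x := (Num.max (`|x| - t) 0).

Section soft_thresh_normal.
Context {R : realType}.
Notation mu := (@lebesgue_measure R).
Implicit Types m s t a c x y : R.

Lemma soft_thresh_sqr t x : 0 <= t -> soft_thresh t x ^+ 2 = excess t x ^+ 2.
Proof.
move=> t0; rewrite /soft_thresh; case: ifPn => [tx|].
  have x0 : 0 < x by exact: le_lt_trans tx.
  by rewrite gtr0_norm// max_l// subr_ge0 ltW.
rewrite -leNgt => xt; case: ifPn => [xNt|].
  have x0 : x < 0 by apply: lt_le_trans xNt _; rewrite oppr_le0.
  rewrite ltr0_norm// max_l; last by rewrite subr_ge0 lerNr ltW.
  by rewrite -sqrrN opprD.
rewrite -leNgt => Ntx.
by rewrite max_r ?expr0n// subr_le0 ler_norml Ntx.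
Qed.

Lemma continuous_excess t : continuous (fun x : R => excess t x).
Proof.
move=> x; apply: (continuous_max (f := fun x : R^o => `|x| - t) (g := cst 0)).
  by apply: cvgB; [exact: norm_continuous | exact: cvg_cst].
exact: cvg_cst.
Qed.

Lemma continuous_excess_mul_expRN t c :
  continuous (fun x : R => excess t x * expR (- ((`|x| - t) * c))).
Proof.
move=> x; apply: cvgM; first exact: continuous_excess.
apply: continuous_comp; last exact: continuous_expR.
apply: cvgN; apply: cvgMl; apply: cvgB; [exact: norm_continuous | exact: cvg_cst].
Qed.

Lemma mulr_expRN_sqr_le s u : 0 < s ->
  u * expR (- (u ^+ 2 / (2 * s ^+ 2))) <= s * expR (- 2^-1).
Proof.
(* e^(u^2/(2 s^2) - 1/2) >= 1 + (u^2/s^2 - 1)/2 >= u/s, the last step by AM-GM *)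
move=> s0; rewrite expRN ler_pdivrMr ?expR_gt0// -mulrA -expRD.
apply: le_trans (ler_wpM2l (ltW s0) (expR_ge1Dx _)).
have -> : s * (1 + (- 2^-1 + u ^+ 2 / (2 * s ^+ 2))) = (s ^+ 2 + u ^+ 2) / (2 * s).
  by field; rewrite gt_eqF.
rewrite ler_pdivlMr ?mulr_gt0//.
have := sqr_ge0 (u - s); rewrite sqrrB; lra.
Qed.

Lemma excess_sqr_normal_pdf_le s t x : 0 < s ->
  excess t x ^+ 2 * normal_pdf 0 s x <=
  normal_peak s * s * expR (- 2^-1) * expR (- t ^+ 2 / (2 * s ^+ 2)) *
  (excess t x * expR (- ((`|x| - t) * (t / s ^+ 2)))).
Proof.
move=> s0; rewrite normal_pdfE ?gt_eqF// /normal_fun subr0.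
have [_|tx] := leP (`|x| - t) 0; first by rewrite expr0n/= !(mul0r, mulr0).
set u := `|x| - t.
have -> : - x ^+ 2 / (s ^+ 2 *+ 2) =
    - t ^+ 2 / (2 * s ^+ 2) + (- (u * (t / s ^+ 2)) + - (u ^+ 2 / (2 * s ^+ 2))).
  rewrite -real_normK ?num_real// -(subrK t `|x|) -/u.
  by field; rewrite gt_eqF.
rewrite !expRD.
set P := normal_peak s; set A := expR (- t ^+ 2 / _).
set B := expR (- (u * _)); set C := expR (- (u ^+ 2 / _)).
have -> : u ^+ 2 * (P * (A * (B * C))) = (P * A * B * u) * (u * C) by ring.
have -> : P * s * expR (- 2^-1) * A * (u * B) = (P * A * B * u) * (s * expR (- 2^-1)).
  by ring.
apply: ler_wpM2l; last exact: mulr_expRN_sqr_le.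
by rewrite !mulr_ge0 ?normal_peak_ge0 ?expR_ge0 ?ltW.
Qed.

Lemma addr1_mul_expRN_le y : 0 < y -> (y + 1) * expR (- y) <= 4 / y.
Proof.
move=> y0; rewrite expRN ler_pdivrMr ?expR_gt0// mulrAC ler_pdivlMr//.
have := @expR_ge1Dxn R y 1 (ltW y0); rewrite (_ : 2`!%:R = 2 :> R)// => ey.
nra.
Qed.

Lemma cvg_addr1_mul_expRN :
  (fun y : R => (y + 1) * expR (- y)) @ +oo --> (0 : R).
Proof.
apply: (@squeeze_cvgr _ _ _ _ (cst 0) (fun y => 4 / y)).
- near=> y; have y0 : 0 < y by near: y; exact: nbhs_pinfty_gt.
  by rewrite addr1_mul_expRN_le// mulr_ge0 ?expR_ge0// addr_ge0// ltW.
- exact: cvg_cst.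
- rewrite -(mulr0 4); apply: cvgM; first exact: cvg_cst.
  by apply/gtr0_cvgV0; [near=> y; near: y; exact: nbhs_pinfty_gt | exact: cvg_id].
Unshelve. all: by end_near. Qed.

Lemma integral_itvcy_mul_expRN a c : 0 < c ->
  (\int[mu]_(x in `[a, +oo[) ((x - a) * expR (- ((x - a) * c)))%:E =
   (c ^- 2)%:E)%E.
Proof.
move=> c0.
pose f x : R^o := (x - a) * expR (- ((x - a) * c)).
pose F x : R^o := - c ^- 2 * (((x - a) * c + 1) * expR (- ((x - a) * c))).
have dF x : is_derive x 1 F (f x).
  apply: is_derive_eq; rewrite /f /GRing.scale/=.
  by field; rewrite gt_eqF.
have cF : continuous F.
  by move=> x; apply/differentiable_continuous/derivable1_diffP; case: (dF x).
have cf : continuous f.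
  by move=> x; apply/differentiable_continuous/derivable1_diffP; exact: ex_derive.
rewrite (_ : c ^- 2 = 0 - F a); last first.
  by rewrite /F subrr !(mul0r, oppr0, expR0, add0r, mulr1, sub0r, opprK).
rewrite EFinB; apply: (ge0_continuous_FTC2y (f := f)).
- by move=> x ax; rewrite mulr_ge0 ?expR_ge0// subr_ge0.
- exact: continuous_subspaceT.
- rewrite -(mulr0 (- c ^- 2)); apply: cvgM; first exact: cvg_cst.
  apply: (cvg_comp (fun x : R => (x - a) * c) (fun y => (y + 1) * expR (- y))).
    exact/gt0_cvgMly/cvg_addrr.
  exact: cvg_addr1_mul_expRN.
- by move=> x _; case: (dF x).
- exact/cvg_at_right_filter/cF.
- by move=> x _; rewrite derive1E; exact: derive_val.
Qed.

Lemma integral_excess_mul_expRN t c : 0 <= t -> 0 < c ->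
  (\int[mu]_x (excess t x * expR (- ((`|x| - t) * c)))%:E = (2 / c ^+ 2)%:E)%E.
Proof.
move=> t0 c0; rewrite ge0_symfun_integralT; first last.
- by move=> x; rewrite /= normrN.
- exact: continuous_excess_mul_expRN.
- by move=> x; rewrite mulr_ge0 ?expR_ge0// le_max lexx orbT.
rewrite EFinM; congr (_ * _)%E.
rewrite -(integral_itvcy_mul_expRN t c c0) [LHS]integral_mkcond [RHS]integral_mkcond.
apply: eq_integral => x _; rewrite !patchE.
case: ifPn => [|/negP]; rewrite in_setE/= => x0;
  case: ifPn => [|/negP]; rewrite in_setE/= in_itv/= andbT => tx.
- by rewrite ger0_norm// max_l// subr_ge0.
- by rewrite ger0_norm// max_r ?mul0r// subr_le0 ltW// ltNge; apply/negP.
- by case: x0; exact: le_trans tx.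
- by [].
Qed.

Lemma integral_normal_prob m s (f : R -> \bar R) :
  (forall x, 0 <= f x)%E -> measurable_fun [set: R] f ->
  (\int[normal_prob m s]_x f x = \int[mu]_x (f x * (normal_pdf m s x)%:E))%E.
Proof.
(* normal_prob is defined by its density, so its Radon-Nikodym derivative
   agrees a.e. with normal_pdf *)
move=> f0 mf; have nmu := normal_prob_dominates m s.
have int_dens := Radon_Nikodym_SigmaFinite.f_integrable nmu.
have mpdf : measurable_fun setT (fun x => (normal_pdf m s x)%:E).
  by apply/measurable_EFinP; exact: measurable_normal_pdf.
rewrite -(Radon_Nikodym_SigmaFinite.change_of_variables nmu)//.
apply: ae_eq_integral => //.
- by apply: emeasurable_funM => //; exact: measurable_int int_dens.
- exact: emeasurable_funM.
apply: ae_eqe_mul2l; apply: integral_ae_eq => //= E _ mE.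
by rewrite -Radon_Nikodym_SigmaFinite.f_integral.
Qed.

Lemma integral_normal_excess_sqr_le s t : 0 < s -> 0 < t ->
  (\int[normal_prob 0 s]_x (excess t x ^+ 2)%:E <=
   (normal_peak s * s * expR (- 2^-1) * expR (- t ^+ 2 / (2 * s ^+ 2)) *
    (2 / (t / s ^+ 2) ^+ 2))%:E)%E.
Proof.
move=> s0 t0; have c0 : 0 < t / s ^+ 2 by rewrite divr_gt0// exprn_gt0.
set K := normal_peak s * s * _ * _.
have K0 : 0 <= K by rewrite !mulr_ge0 ?normal_peak_ge0 ?expR_ge0 ?ltW.
pose g x := excess t x * expR (- ((`|x| - t) * (t / s ^+ 2))).
have g0 x : (0 <= (g x)%:E)%E by rewrite lee_fin mulr_ge0 ?expR_ge0// le_max lexx orbT.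
have mg : measurable_fun setT (fun x => (g x)%:E).
  apply/measurable_EFinP; apply: continuous_measurable_fun.
  exact: continuous_excess_mul_expRN.
have mexcess_sqr : measurable_fun setT (fun x => excess t x ^+ 2).
  by apply: measurable_funX; apply: continuous_measurable_fun; exact: continuous_excess.
rewrite integral_normal_prob; first last.
- exact/measurable_EFinP.
- by move=> x; rewrite lee_fin sqr_ge0.
apply: (@le_trans _ _ (\int[mu]_x (K%:E * (g x)%:E))%E).
  apply: ge0_le_integral => //.
  - by move=> x _; rewrite -EFinM lee_fin mulr_ge0 ?sqr_ge0 ?normal_pdf_ge0.
  - by apply: emeasurable_funM; apply/measurable_EFinP => //; exact: measurable_normal_pdf.
  - exact: emeasurable_funM.
  - by move=> x _; rewrite -EFinM lee_fin; exact: excess_sqr_normal_pdf_le.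
by rewrite ge0_integralZl_EFin// integral_excess_mul_expRN ?(ltW t0).
Qed.

Lemma sqrt_2_div_pi_expR1 s : 0 < s ->
  Num.sqrt (2 / (pi * expR 1)) = 2 * (normal_peak s * s) * expR (- 2^-1).
Proof.
move=> s0; have pi0 : pi != 0 :> R by rewrite gt_eqF// pi_gt0.
have peak2 : normal_peak s ^+ 2 = (s ^+ 2 * pi *+ 2)^-1.
  by rewrite exprVn sqr_sqrtr// mulrn_wge0// mulr_ge0 ?sqr_ge0// pi_ge0.
have e2 : expR (- 2^-1) ^+ 2 = (expR 1)^-1 :> R.
  by rewrite -expRM_natr -expRN; congr expR; field.
rewrite -[RHS]ger0_norm ?mulr_ge0 ?normal_peak_ge0 ?expR_ge0 ?ltW//.
rewrite -sqrtr_sqr; congr Num.sqrt.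
rewrite !exprMn peak2 e2.
(* [field] would unfold [pi] *)
move: pi0; generalize (@pi R) => p p0.
by field; rewrite p0 expR_eq0 gt_eqF.
Qed.

End soft_thresh_normal.

Theorem lemma4p6 (R : realType) (sigma t : R) (hsigma : 0 < sigma) (ht : 0 < t) :
  (\int[normal_prob 0 sigma]_x ((soft_thresh t x) ^+ 2)%:E <=
   (sigma ^+ 4 * Num.sqrt (2 / (pi * expR 1)) * t ^- 2
      * expR (- t ^+ 2 / (2 * sigma ^+ 2)))%:E)%E.
Proof.
under eq_integral do rewrite soft_thresh_sqr ?(ltW ht)//.
apply: le_trans (integral_normal_excess_sqr_le sigma t hsigma ht) _.
rewrite lee_fin (sqrt_2_div_pi_expR1 sigma hsigma) le_eqVlt; apply/predU1l.
by field; rewrite !gt_eqF.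
Qed.
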